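(* Let $m>0$ and $n\ge 0$ be integers. Then the diameter of ${\rm SR}(m,n)$ is $\min(m-1,n)$.
   Context: ${\rm SR}(m,n)$ is the graph whose vertices are the vectors in $\{0,1,2,\dots\}^m$ with coordinate sum $n$, two vertices being adjacent when they differ in precisely two coordinate positions. *)

From mathcomp Require Import all_boot.
Set Implicit Arguments. Unset Strict Implicit. Unset Printing Implicit Defensive.

(* Vertices of SR(m,n): vectors in N^m with coordinate sum n.  Since the sum is
   n, every coordinate is at most n, so coordinates are taken in 'I_n.+1
   without loss. *)
Definition SRvert (m n : nat) :=
  {f : {ffun 'I_m -> 'I_n.+1} | \sum_(i < m) (f i : nat) == n}.

Definition coord (m n : nat) (x : SRvert m n) (i : 'I_m) : nat := val x i.

Definition SRadj (m n : nat) : rel (SRvert m n) :=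
  fun x y => #|[set i : 'I_m | coord x i != coord y i]| == 2.

Definition walk_of_len (T : eqType) (e : rel T) (x y : T) (k : nat) : Prop :=
  exists p : seq T, [/\ path e x p, last x p = y & size p = k].

Definition dist_le (T : eqType) (e : rel T) (x y : T) (k : nat) : Prop :=
  exists2 j, j <= k & walk_of_len e x y j.

Definition has_diameter (T : finType) (e : rel T) (d : nat) : Prop :=
  (forall x y : T, dist_le e x y d) /\
  (exists x y : T, forall j, walk_of_len e x y j -> d <= j).

(* Upper bound: if x <> y, pick i with y_i < x_i and j with x_j < y_j and move
   min(x_i - y_i, y_j - x_j) units from i to j.  This is an edge, it fixes at
   least one of the coordinates where x and y differ, and it strictly lowers
   the total excess sum_k (x_k - y_k) <= n; so d(x,y) <= min(m-1, n).
   Lower bound: an edge creates at most one new nonzero coordinate, since one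
   of its two moved coordinates must decrease.  Starting from n e_last, it
   takes min(m-1, n) steps to reach a vertex with min(m-1, n) nonzero
   coordinates outside the last one. *)

From mathcomp Require Import all_boot.
From mathcomp Require Import zify.

Set Implicit Arguments.
Unset Strict Implicit.
Unset Printing Implicit Defensive.

Section Walks.
Variables (T : eqType) (e : rel T).

Lemma dist_le_refl x k : dist_le e x x k.
Proof. by exists 0 => //; exists [::]. Qed.

Lemma dist_le_cons x z y k : e x z -> dist_le e z y k -> dist_le e x y k.+1.
Proof.
move=> exz [j le_jk [p [pz last_p size_p]]].
by exists j.+1 => //; exists (z :: p); rewrite /= exz size_p.
Qed.

Lemma walk_of_len_lipschitz (f : T -> nat) :
    (forall x y, e x y -> f y <= (f x).+1) ->
  forall x y j, walk_of_len e x y j -> f y <= f x + j.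
Proof.
move=> f_step x y j [p [+ <- <-]]; elim: p x => [|z p IHp] x /=.
  by rewrite addn0.
case/andP=> /f_step exz /IHp; rewrite addnS; lia.
Qed.

End Walks.

Lemma eq_leq_sum (I : finType) (E1 E2 : I -> nat) :
  (forall i, E1 i <= E2 i) -> \sum_i E1 i = \sum_i E2 i -> E1 =1 E2.
Proof.
move=> le12 /eqP; rewrite (leqif_sum (fun i _ => leqif_eq (le12 i))).2.
by move/forallP=> eq12 i; apply/eqP/eq12.
Qed.

Lemma sum_delta (I : finType) (i : I) a : \sum_k ((k == i) * a) = a.
Proof. by rewrite (bigD1 i) //= eqxx mul1n big1 ?addn0 // => k /negbTE ->. Qed.

Section SR.
Variables m n : nat.
Local Notation V := (SRvert m n).
Local Notation adj := (@SRadj m n).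

Lemma coord_sum (x : V) : \sum_k coord x k = n.
Proof. exact/eqP/(valP x). Qed.

Lemma coord_inj (x y : V) : coord x =1 coord y -> x = y.
Proof. by move=> xy; apply/val_inj/ffunP => i; apply/val_inj/xy. Qed.

Lemma exists_vertex (h : 'I_m -> nat) :
  \sum_k h k = n -> exists x : V, coord x =1 h.
Proof.
move=> sum_h.
have h_le k : h k < n.+1 by rewrite ltnS -sum_h (bigD1 k) //= leq_addr.
pose f := [ffun k => Ordinal (h_le k)].
have sum_f : \sum_k (f k : nat) == n.
  by apply/eqP; rewrite -[RHS]sum_h; apply/eq_bigr => k _; rewrite ffunE.
by exists (exist _ f sum_f) => k; rewrite /coord /= ffunE.
Qed.

Lemma exists_coord_gt (x y : V) : x <> y -> exists i, coord y i < coord x i.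
Proof.
move=> neq_xy; apply/existsP; apply: contraNT (introN eqP neq_xy).
rewrite negb_exists => /forallP le_xy; apply/eqP/coord_inj/eq_leq_sum.
- by move=> i; rewrite leqNgt le_xy.
- by rewrite !coord_sum.
Qed.

Definition diff (x y : V) := [set k | coord x k != coord y k].
Definition excess (x y : V) := \sum_k (coord x k - coord y k).

Lemma card_diff_le x y : #|diff x y| <= m.
Proof. by rewrite -[X in _ <= X]card_ord max_card. Qed.

Lemma excess_le x y : excess x y <= n.
Proof. by rewrite -(coord_sum x) leq_sum // => k _; rewrite leq_subr. Qed.

Section Transfer.
Variables (x : V) (i j : 'I_m) (a : nat).
Hypothesis neq_ij : i != j.

Definition transfer k :=
  if k == i then coord x i - a else if k == j then coord x j + a else coord x k.

Lemma transfer_sum : a <= coord x i -> \sum_k transfer k = n.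
Proof.
move=> a_le.
have shift k : transfer k + (k == i) * a = coord x k + (k == j) * a.
  rewrite /transfer; case: (eqVneq k i) => [->|_].
    by rewrite (negbTE neq_ij); lia.
  by case: (eqVneq k j) => [->|_]; lia.
apply/(@addIn a); rewrite -{1}(sum_delta i a) -big_split /=.
by rewrite (eq_bigr _ (fun k _ => shift k)) big_split /= coord_sum sum_delta.
Qed.

Lemma diff_transfer (z : V) :
  0 < a -> a <= coord x i -> coord z =1 transfer -> diff x z = [set i; j].
Proof.
move=> a_gt0 a_le zE; apply/setP => k; rewrite !inE zE /transfer.
case: (eqVneq k i) => [->|_] /=; first by apply/eqP; lia.
by case: (eqVneq k j) => [->|_] /=; [apply/eqP; lia | rewrite eqxx].
Qed.

End Transfer.

Lemma step_towards (x y : V) : x <> y -> exists2 z, adj x z &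
  [/\ 1 < #|diff x y|, #|diff z y| < #|diff x y| & excess z y < excess x y].
Proof.
move=> neq_xy; have [i gt_i] := exists_coord_gt neq_xy.
have [j lt_j] := exists_coord_gt (nesym neq_xy).
have neq_ij : i != j by apply: contraTneq gt_i => ->; rewrite -leqNgt ltnW.
pose a := minn (coord x i - coord y i) (coord y j - coord x j).
have [a_gt0 a_le] : 0 < a /\ a <= coord x i by rewrite /a; lia.
have [z zE] := exists_vertex (transfer_sum neq_ij a_le).
exists z.
  change (#|diff x z| == 2).
  by rewrite (diff_transfer neq_ij a_gt0 a_le zE) cards2 neq_ij.
have sub_ij : [set i; j] \subset diff x y.
  by apply/subsetP => k; rewrite !inE => /orP[] /eqP ->; apply/eqP; lia.
split.
- by move: (subset_leq_card sub_ij); rewrite cards2 neq_ij.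
- apply/proper_card/properP; split.
    apply/subsetP => k; rewrite !inE zE /transfer.
    case: (eqVneq k i) => [-> _|_]; first by apply/eqP; lia.
    by case: (eqVneq k j) => [-> _|_ //]; apply/eqP; lia.
  have [a_eq | a_eq] : a = coord x i - coord y i \/ a = coord y j - coord x j.
  + by rewrite /a; lia.
  + exists i; rewrite !inE; first by apply/eqP; lia.
    by rewrite zE /transfer eqxx negbK; apply/eqP; lia.
  + exists j; rewrite !inE; first by apply/eqP; lia.
    rewrite zE /transfer ifN_eqC // eqxx negbK.
    by apply/eqP; lia.
- have shift k : (coord z k - coord y k) + (k == i) * a = coord x k - coord y k.
    rewrite zE /transfer; case: (eqVneq k i) => [->|_] /=; first lia.
    by case: (eqVneq k j) => [->|_] /=; lia.
  rewrite /excess -(eq_bigr _ (fun k _ => shift k)) big_split /= sum_delta.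
  by rewrite -[X in X < _]addn0 ltn_add2l.
Qed.

Lemma dist_le_diff_excess k x y :
  minn (#|diff x y|).-1 (excess x y) <= k -> dist_le adj x y k.
Proof.
elim: k x y => [|k IHk] x y le_k; have [-> | /eqP neq_xy] := eqVneq x y;
  [exact: dist_le_refl | | exact: dist_le_refl |];
  have [z adj_xz [gt1 lt_diff lt_exc]] := step_towards neq_xy.
- by move: le_k; lia.
- by apply: dist_le_cons adj_xz (IHk _ _ _); lia.
Qed.

Lemma dist_le_min x y : dist_le adj x y (minn m.-1 n).
Proof.
apply: dist_le_diff_excess.
by have := card_diff_le x y; have := excess_le x y; lia.
Qed.

Definition supp (x : V) := [set k | coord x k != 0].

Lemma card_suppD_adj x z : adj x z -> #|supp z :\: supp x| <= 1.
Proof.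
move=> /eqP; rewrite -/(diff x z) => card_xz.
have neq_xz : x <> z.
  move=> eq_xz; move: card_xz; rewrite eq_xz.
  suff -> : diff z z = set0 by rewrite cards0.
  by apply/setP => k; rewrite !inE eqxx.
have [i lt_i] := exists_coord_gt neq_xz.
have i_diff : i \in diff x z by rewrite inE; apply/eqP; lia.
have : supp z :\: supp x \subset diff x z :\ i.
  apply/subsetP => k; rewrite !inE negbK => /andP[/eqP x0 z0].
  rewrite x0 [0 == _]eq_sym z0 andbT.
  by apply: contraTneq lt_i => eq_ik; rewrite -eq_ik x0.
move/subset_leq_card; move: (cardsD1 i (diff x z)); rewrite i_diff card_xz.
lia.
Qed.

Lemma card_setI_supp_adj (A : {set 'I_m}) x z :
  adj x z -> #|A :&: supp z| <= (#|A :&: supp x|).+1.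
Proof.
move=> /card_suppD_adj new_le1.
have sub : A :&: supp z \subset (A :&: supp x) :|: (supp z :\: supp x).
  by apply/subsetP => k; rewrite !inE; case: (k \in A); case: (coord x k != 0).
apply: leq_trans (subset_leq_card sub) _; rewrite -addn1.
exact: leq_trans (leq_card_setU _ _) (leq_add (leqnn _) new_le1).
Qed.

End SR.

Theorem proposition8 (m n : nat) (hm : 0 < m) :
  has_diameter (@SRadj m n) (minn m.-1 n).
Proof.
split; first exact: dist_le_min.
case: m hm => // m' _ /=; set d := minn m' n.
have le_d : d <= m' by apply: geq_minl.
pose A := widen_ord (leqW le_d) @: [set: 'I_d].
have card_A : #|A| = d.
  by rewrite card_imset ?cardsT ?card_ord // => i1 i2 /(congr1 val) /= /val_inj.
have last_notin_A : ord_max \notin A.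
  by apply/negP => /imsetP [i _ /(congr1 val) /=]; have := ltn_ord i; lia.
have [x0 x0E] := exists_vertex (sum_delta (@ord_max m') n).
have [y yE] : exists y : SRvert m'.+1 n,
    coord y =1 fun k => (k \in A) + (k == ord_max) * (n - d).
  have sum_A : \sum_k (k \in A : nat) = d.
    by rewrite -card_A -sum1_card [RHS]big_mkcond.
  apply: exists_vertex; rewrite big_split /= sum_delta sum_A.
  by have := geq_minr m' n; lia.
exists x0, y => j /(walk_of_len_lipschitz (card_setI_supp_adj A)).
have -> : A :&: supp x0 = set0.
  apply/setP => k; rewrite !inE x0E; case: (eqVneq k ord_max) => [->|_] /=.
    by rewrite (negbTE last_notin_A).
  by rewrite andbF.
have -> : A :&: supp y = A.
  by apply/setIidPl/subsetP => k kA; rewrite inE yE kA.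
by rewrite cards0 card_A.
Qed.
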